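(* Let $n\ge 1$, let $F:\mathbb{F}_{2^n}\to\mathbb{F}_{2^n}$ be a function and let $c\in\mathbb{F}_{2^n}^*$. Then ${}_c\Delta_F(a,b)={}_{c^{-1}}\Delta_F(a,bc^{-1})$ for all $a\in\mathbb{F}_{2^n}^*$ and $b\in\mathbb{F}_{2^n}$. If moreover $F$ is a permutation of $\mathbb{F}_{2^n}$, then ${}_c\Delta_F={}_{c^{-1}}\Delta_F$.
   Context: For $F:\mathbb{F}_{2^n}\to\mathbb{F}_{2^n}$ and $c\in\mathbb{F}_{2^n}$, the $c$-differential of $F$ in direction $a$ is ${}_cD_aF(x)=F(x+a)-cF(x)$ (in characteristic $2$ this is $F(x+a)+cF(x)$). For $a,b\in\mathbb{F}_{2^n}$, ${}_c\Delta_F(a,b)$ denotes the number of $x\in\mathbb{F}_{2^n}$ with ${}_cD_aF(x)=b$. The $c$-differential uniformity of $F$ is ${}_c\Delta_F=\max\{{}_c\Delta_F(a,b): a,b\in\mathbb{F}_{2^n},\ a\neq 0 \text{ if } c=1\}$. *)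

From HB Require Import structures.
From mathcomp Require Import all_boot all_order all_algebra all_field.
Set Implicit Arguments. Unset Strict Implicit. Unset Printing Implicit Defensive.
Import GRing.Theory.
Local Open Scope ring_scope.

Definition cDelta (K : finFieldType) (F : K -> K) (c a b : K) : nat :=
  #|[set x : K | F (x + a) - c * F x == b]|.

Definition cUnif (K : finFieldType) (F : K -> K) (c : K) : nat :=
  \max_(a : K | (c != 1%R) || (a != 0%R)) \max_(b : K) cDelta F c a b.

From HB Require Import structures.
From mathcomp Require Import all_boot all_order all_algebra all_field.
Set Implicit Arguments. Unset Strict Implicit. Unset Printing Implicit Defensive.
Import GRing.Theory.
Local Open Scope ring_scope.

(* In characteristic 2 the equation F(x + a) + c F(x) = b, multiplied by
   c^-1, becomes F(x) + c^-1 F(x + a) = b c^-1, which is the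
   c^-1-differential equation at the translated point x + a.  So the
   translation x |-> x + a matches the solution sets of the two equations,
   and b |-> b c^-1 permutes the right-hand sides, which leaves the
   uniformity unchanged. *)

Lemma cdiff_eq_inv_pchar2 (K : fieldType) (c u v b : K) :
  2%N \in [pchar K] -> c != 0 -> (u - c * v == b) = (v - c^-1 * u == b / c).
Proof.
move=> pchar2 c_neq0.
rewrite -[in RHS](inj_eq (mulfI c_neq0)) mulrBr mulrA divff //.
by rewrite mul1r mulrCA divff // mulr1 !(GRing.subr_pchar2 pchar2) addrC.
Qed.

Section CDifferentialInverse.

Variables (K : finFieldType) (pchar2 : 2%N \in [pchar K]).
Variables (F : K -> K) (c : K) (c_neq0 : c != 0).

Lemma cDelta_inv_pchar2 (a b : K) : cDelta F c a b = cDelta F c^-1 a (b / c).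
Proof.
rewrite /cDelta -(card_preimset _ (addIr a)); apply: eq_card => x.
by rewrite !inE (GRing.addrK_pchar2 pchar2) cdiff_eq_inv_pchar2.
Qed.

Lemma cUnif_inv_pchar2 : cUnif F c = cUnif F c^-1.
Proof.
rewrite /cUnif invr_eq1; apply: eq_bigr => a _.
under eq_bigr => b _ do rewrite cDelta_inv_pchar2.
by rewrite (reindex_inj (mulIf c_neq0)); apply: eq_bigr => b _; rewrite mulfK.
Qed.

End CDifferentialInverse.

Theorem mainTheorem1 (K : finFieldType) (n : nat) (hn : (1 <= n)%N)
    (hK : #|K| = (2 ^ n)%N) (F : K -> K) (c : K) (hc : c != 0) :
  (forall a b : K, a != 0 -> cDelta F c a b = cDelta F c^-1 a (b * c^-1)) /\
  (bijective F -> cUnif F c = cUnif F c^-1).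
Proof.
have pchar2 : 2%N \in [pchar K] by apply: (card_finPcharP hK).
split=> [a b _ | _]; first exact: cDelta_inv_pchar2.
exact: cUnif_inv_pchar2.
Qed.
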